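(* The class of all bounded lattices with a unary operation $'$, $(L,\vee,\wedge,{}',0,1)$, in which the Sasaki operations form an adjoint pair coincides with the class of bounded lattices with complementation satisfying the identities $x\vee y'\approx y'\vee\big((x\vee y')\wedge y\big)$ and $x\wedge y\approx x\wedge\big((x\wedge y)\vee x'\big)$; in particular it is a variety.
   Context: A complementation is a unary operation $'$ with $x\vee x'\approx1$ and $x\wedge x'\approx0$. The Sasaki operations are $x\odot y=(x\vee y')\wedge y$ and $x\to y=x'\vee(x\wedge y)$; they form an adjoint pair if for all $x,y,z$: $x\odot y\le z$ iff $x\le y\to z$. *)

From mathcomp Require Import all_boot all_order.
Set Implicit Arguments. Unset Strict Implicit. Unset Printing Implicit Defensive.
Import Order.Theory.
Local Open Scope order_scope.

(* Bounded lattices are MathComp's [tbLatticeType d]: join [`|`], meet [`&`],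
   bottom [\bot] (= 0), top [\top] (= 1). The unary operation ' is [c : L -> L]. *)

Section Sasaki.
Context {disp : Order.disp_t} {L : tbLatticeType disp}.

Definition complementation (c : L -> L) : Prop :=
  forall x : L, x `|` c x = \top /\ x `&` c x = \bot.

Definition sasaki_prod (c : L -> L) (x y : L) : L := (x `|` c y) `&` y.

Definition sasaki_imp (c : L -> L) (x y : L) : L := c x `|` (x `&` y).

Definition sasaki_adjoint (c : L -> L) : Prop :=
  forall x y z : L, sasaki_prod c x y <= z <-> x <= sasaki_imp c y z.

End Sasaki.

From mathcomp Require Import all_boot all_order.
Import Order.Theory.
Local Open Scope order_scope.

(* Up to commuting a join, the two identities read x ∨ y' = y' ∨ (x ⊙ y) and
   x ∧ y = x ∧ (x → y).  An adjunction gives the first through its unit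
   x ≤ y → (x ⊙ y) and the second through its counit (x → y) ⊙ x ≤ y;
   complementation comes from the instances x = 1 and z = 0.  Conversely, the
   two identities alone, without complementation, give the adjunction:
   x ≤ x ∨ y' = y' ∨ (x ⊙ y) and x ⊙ y ≤ y ∧ (y → z) = y ∧ z. *)

Section SasakiAdjunction.
Context {disp : Order.disp_t} {L : tbLatticeType disp} (c : L -> L).

Definition sasaki_join_law : Prop :=
  forall x y : L, x `|` c y = c y `|` sasaki_prod c x y.

Definition sasaki_meet_law : Prop :=
  forall x y : L, x `&` y = x `&` sasaki_imp c x y.

Section FromAdjunction.
Hypothesis adj : sasaki_adjoint c.

Lemma sasaki_unit (x y : L) : x <= sasaki_imp c y (sasaki_prod c x y).
Proof. exact/adj. Qed.

Lemma sasaki_counit (x y : L) : sasaki_prod c (sasaki_imp c x y) x <= y.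
Proof. exact/adj. Qed.

Lemma sasaki_adjoint_complementation : complementation c.
Proof.
move=> x; split; apply/eqP; rewrite eq_le ?lex1 ?le0x ?andbT.
- have := sasaki_unit \top x.
  by rewrite /sasaki_imp /sasaki_prod join1x meet1x meetxx joinC.
- have := sasaki_counit x \bot.
  by rewrite /sasaki_prod /sasaki_imp meetx0 joinx0 joinxx meetC.
Qed.

Lemma sasaki_adjoint_join_law : sasaki_join_law.
Proof.
move=> x y; apply: le_anti; rewrite !leUx leUr leUl leIl !andbT /=.
by apply: le_trans (sasaki_unit x y) _; rewrite leU2 ?leIr.
Qed.

Lemma sasaki_adjoint_meet_law : sasaki_meet_law.
Proof.
move=> x y; apply: le_anti; rewrite !lexI !leIl leUr /=.
have := sasaki_counit x y.
by rewrite /sasaki_prod /sasaki_imp joinAC joinxx meetC.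
Qed.

End FromAdjunction.

Lemma sasaki_laws_adjoint :
  sasaki_join_law -> sasaki_meet_law -> sasaki_adjoint c.
Proof.
move=> join_law meet_law x y z; split=> [le_xy_z | le_x_imp].
- apply: le_trans (leUl x (c y)) _; rewrite join_law.
  by rewrite /sasaki_imp leU2 // lexI leIr.
- apply: le_trans _ (leIr z y); rewrite [X in _ <= X]meet_law.
  by rewrite /sasaki_prod meetC leI2 // leUx le_x_imp leUl.
Qed.

End SasakiAdjunction.

Theorem mainTheorem3 (disp : Order.disp_t) (L : tbLatticeType disp) (c : L -> L) :
  sasaki_adjoint c <->
  [/\ complementation c,
      (forall x y : L, x `|` c y = c y `|` ((x `|` c y) `&` y)) &
      (forall x y : L, x `&` y = x `&` ((x `&` y) `|` c x))].
Proof.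
have meet_lawE : sasaki_meet_law c <->
    (forall x y : L, x `&` y = x `&` ((x `&` y) `|` c x)).
  by split=> law x y; rewrite /sasaki_imp joinC; apply: law.
split=> [adj | [_ join_law /meet_lawE meet_law]].
- split; first exact: sasaki_adjoint_complementation.
  + exact: sasaki_adjoint_join_law.
  + exact/meet_lawE/sasaki_adjoint_meet_law.
- exact: sasaki_laws_adjoint.
Qed.
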